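(* Let $\mathcal X$ be finite with $N=|\mathcal X|\ge2$, let $c\in(0,1/N]$ and $0\le\varepsilon<\log\frac{2}{Nc}$. Then $$\sup_{K\in\mathcal M_1(\varepsilon,c)}\eta_{\mathrm{TV}}(K)=\frac{e^\varepsilon-1}{e^\varepsilon(1-Nc)+1},$$ moreover $\sup_{K\in\mathcal M_2(\varepsilon,c)}\eta_{\mathrm{TV}}(K)\le\sup_{K\in\mathcal M_1(\varepsilon,c)}\eta_{\mathrm{TV}}(K)$ (whenever $\mathcal M_2(\varepsilon,c)\neq\emptyset$), and $\mathcal M_0(\varepsilon,c)=\emptyset$.
   Context: A kernel $K$ is a row-stochastic matrix with entries $K_{Y|X=x}(y)$, $(K\circ P_X)(y)=\sum_xK_{Y|X=x}(y)P_X(x)$. PML: $\ell_{K\times P_X}(X\to y)=\log\frac{\max_x K_{Y|X=x}(y)}{(K\circ P_X)(y)}$ for full-support $P_X$ and $(K\circ P_X)(y)>0$. $\mathcal Q_{\mathcal X}(c)=\{P_X:\min_xP_X(x)\ge c\}$; $C(K,\mathcal P)=\sup_{P_X\in\mathcal P}\sup_{y:(K\circ P_X)(y)>0}\ell_{K\times P_X}(X\to y)$; $\mathcal M(\varepsilon,c)$ is the set of kernels with $C(K,\mathcal Q_{\mathcal X}(c))\le\varepsilon$. $\mathcal S_{N,2}$ denotes the $N\times 2$ row-stochastic matrices (kernels to a binary output set $\mathcal Y$). $\mathcal T_0=\{K\in\mathcal S_{N,2}:\forall y\in\mathcal Y\ \exists x\in\mathcal X,\ K_{Y|X=x}(y)=0\}$,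 $\mathcal T_1=\{K\in\mathcal S_{N,2}: K_{Y|X=x}(y)>0\ \forall x,y\}$. Define $\mathcal M_0(\varepsilon,c)=\mathcal M(\varepsilon,c)\cap\mathcal T_0$, $\mathcal M_1(\varepsilon,c)=\mathcal M(\varepsilon,c)\cap\mathcal T_1$, $\mathcal M_2(\varepsilon,c)=(\mathcal M(\varepsilon,c)\cap\mathcal S_{N,2})\setminus(\mathcal M_0(\varepsilon,c)\cup\mathcal M_1(\varepsilon,c))$. $\eta_{\mathrm{TV}}(K)=\max_{x\ne x'}\mathrm{TV}(K_{Y|X=x}\|K_{Y|X=x'})$. *)

From HB Require Import structures.
From mathcomp Require Import all_boot all_order all_algebra.
From mathcomp Require Import boolp classical_sets reals.
From mathcomp.analysis Require Import sequences exp.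
Set Implicit Arguments. Unset Strict Implicit. Unset Printing Implicit Defensive.
Import Order.TTheory GRing.Theory Num.Theory.
Local Open Scope ring_scope.
Local Open Scope classical_set_scope.

Section Defs.
Variables (R : realType) (N : nat).

(* A kernel to the binary output set Y = 'I_2: K x y = K_{Y|X=x}(y). *)
Definition row_stochastic (K : 'M[R]_(N, 2)) : Prop :=
  (forall x y, 0 <= K x y) /\ (forall x, \sum_(y < 2) K x y = 1).

Definition S_N2 : set 'M[R]_(N, 2) := [set K | row_stochastic K].

Definition out_dist (K : 'M[R]_(N, 2)) (P : 'I_N -> R) (y : 'I_2) : R :=
  \sum_(x < N) K x y * P x.

(* max_x K_{Y|X=x}(y) (entries are nonnegative, so 0 is a neutral default) *)
Definition max_col (K : 'M[R]_(N, 2)) (y : 'I_2) : R :=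
  \big[Num.max/0]_(x < N) K x y.

Definition pml (K : 'M[R]_(N, 2)) (P : 'I_N -> R) (y : 'I_2) : R :=
  ln (max_col K y / out_dist K P y).

Definition Qc (c : R) : set ('I_N -> R) :=
  [set P | (forall x, 0 <= P x) /\ \sum_(x < N) P x = 1 /\ (forall x, c <= P x)].

Definition Cap (K : 'M[R]_(N, 2)) (Pset : set ('I_N -> R)) : R :=
  sup [set l | exists P y, Pset P /\ 0 < out_dist K P y /\ l = pml K P y].

(* M(eps, c) restricted to kernels to the binary output set *)
Definition M (eps c : R) : set 'M[R]_(N, 2) :=
  [set K | row_stochastic K /\ Cap K (Qc c) <= eps].

Definition T0 : set 'M[R]_(N, 2) :=
  [set K | row_stochastic K /\ forall y, exists x, K x y = 0].
Definition T1 : set 'M[R]_(N, 2) :=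
  [set K | row_stochastic K /\ forall x y, 0 < K x y].

Definition M0 eps c := M eps c `&` T0.
Definition M1 eps c := M eps c `&` T1.
Definition M2 eps c := (M eps c `&` S_N2) `\` (M0 eps c `|` M1 eps c).

Definition TV (K : 'M[R]_(N, 2)) (x x' : 'I_N) : R :=
  2^-1 * \sum_(y < 2) `|K x y - K x' y|.

Definition eta_TV (K : 'M[R]_(N, 2)) : R :=
  \big[Num.max/0]_(x < N) \big[Num.max/0]_(x' < N | x != x') TV K x x'.

End Defs.

(* A binary-output kernel is determined by its first column a_x = K x 0, and
   eta_TV(K) = max |a_x - a_x'|.  Testing the leakage constraint of K on the
   two input distributions that put the spare mass 1 - Nc on x' (output 0) and
   on x (output 1) gives a_x <= e^eps (c S + (1 - Nc) a_x') and
   1 - a_x' <= e^eps (c (N - S) + (1 - Nc)(1 - a_x)), with S the first column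
   sum; adding them yields (a_x - a_x')(e^eps (1 - Nc) + 1) <= e^eps - 1.  The
   kernel with rows (1 +- D)/2 on two inputs and (1/2, 1/2) elsewhere attains
   this bound D = (e^eps - 1) / (e^eps (1 - Nc) + 1); the bound holds on all of
   M(eps, c), so it also dominates eta_TV on M2.  A kernel in T0 has entries
   a_x = 0 and a_x' = 1, forcing D >= 1, which the hypothesis e^eps N c < 2
   excludes. *)
From HB Require Import structures.
From mathcomp Require Import all_boot all_order all_algebra.
From mathcomp Require Import boolp classical_sets reals.
From mathcomp.analysis Require Import sequences exp.
From mathcomp Require Import ring lra.
Import Order.TTheory GRing.Theory Num.Theory.
Local Open Scope ring_scope.
Local Open Scope classical_set_scope.

Lemma sup_eq_attained (R : realType) (E : set R) m : E m -> ubound E m -> sup E = m.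
Proof.
move=> Em ubm; apply/le_anti; rewrite ge_sup //=; last by exists m.
by apply: sup_upper_bound => //; split; exists m.
Qed.

Section BinaryKernels.
Local Set Implicit Arguments.
Local Unset Strict Implicit.
Variables (R : realType) (N : nat).
Implicit Types (K : 'M[R]_(N, 2)) (P : 'I_N -> R).

Lemma sum_ord2 (F : 'I_2 -> R) : \sum_(y < 2) F y = F ord0 + F ord_max.
Proof. by rewrite big_ord_recr big_ord1; congr (_ + _); congr F; apply/val_inj. Qed.

Lemma row_stochastic_col1 K x : row_stochastic K -> K x ord_max = 1 - K x ord0.
Proof. by case=> _ /(_ x); rewrite sum_ord2 => <-; ring. Qed.

Lemma TV_binary K x x' : row_stochastic K -> TV K x x' = `|K x ord0 - K x' ord0|.
Proof.
move=> rsK; rewrite /TV sum_ord2 !(row_stochastic_col1 _ rsK).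
have -> : 1 - K x ord0 - (1 - K x' ord0) = - (K x ord0 - K x' ord0) by ring.
by rewrite normrN; field.
Qed.

Lemma le_max_col K y x : K x y <= max_col K y.
Proof. by rewrite /max_col (bigD1 x) //= le_max lexx. Qed.

Lemma sum_mul_indicator (F : 'I_N -> R) x' : \sum_x F x * (x == x')%:R = F x'.
Proof.
rewrite (bigD1 x') //= eqxx mulr1 big1 ?addr0 // => x /negbTE ->.
by rewrite mulr0.
Qed.

Definition concentrated (c : R) (x' : 'I_N) : 'I_N -> R :=
  fun x => c + (1 - N%:R * c) * (x == x')%:R.

Lemma Qc_concentrated c x' : 0 <= c -> N%:R * c <= 1 -> Qc c (concentrated c x').
Proof.
move=> c_ge0 Nc_le1; have q_ge0 : 0 <= 1 - N%:R * c by rewrite subr_ge0.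
have ind_ge0 (x : 'I_N) : 0 <= (1 - N%:R * c) * (x == x')%:R.
  by rewrite mulr_ge0 ?ler0n.
split; [|split] => [x||x].
- exact: addr_ge0.
- rewrite big_split /= sumr_const card_ord.
  by rewrite (sum_mul_indicator (fun=> _)) -mulr_natl; ring.
- by rewrite lerDl.
Qed.

Lemma out_dist_concentrated K c x' y :
  out_dist K (concentrated c x') y =
    c * \sum_x K x y + (1 - N%:R * c) * K x' y.
Proof.
rewrite /out_dist /concentrated.
under eq_bigr => x _ do rewrite mulrDr mulrCA.
by rewrite big_split /= -mulr_sumr -big_distrl /= mulrC sum_mul_indicator.
Qed.

Lemma out_dist_ge_entry K c P y x :
  Qc c P -> (forall x y, 0 <= K x y) -> c * K x y <= out_dist K P y.
Proof.
move=> [P_ge0 [_ P_ge_c]] K_ge0; rewrite /out_dist (bigD1 x) //= mulrC.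
rewrite -[X in X <= _]addr0 lerD ?ler_wpM2l //.
by rewrite sumr_ge0 // => i _; rewrite mulr_ge0.
Qed.

Lemma out_dist_ge_colsum K c P y m :
  Qc c P -> 0 <= m -> (forall x, m <= K x y) ->
  c * \sum_x K x y + m * (1 - N%:R * c) <= out_dist K P y.
Proof.
move=> [_ [P_sum1 P_ge_c]] m_ge0 m_le.
have -> : out_dist K P y = c * \sum_x K x y + \sum_x K x y * (P x - c).
  by rewrite /out_dist mulr_sumr -big_split /=; apply: eq_bigr => x _; ring.
have -> : m * (1 - N%:R * c) = \sum_x m * (P x - c).
  by rewrite -mulr_sumr sumrB P_sum1 sumr_const card_ord -mulr_natr; ring.
by rewrite lerD2l ler_sum // => x _; rewrite ler_wpM2r ?subr_ge0.
Qed.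

Lemma pml_le_Cap K c P y : 0 < c -> row_stochastic K -> Qc c P ->
  0 < out_dist K P y -> pml K P y <= Cap K (Qc c).
Proof.
move=> c_gt0 [K_ge0 _] QP od_gt0; apply: sup_upper_bound; last by exists P, y.
split; first by exists (pml K P y), P, y.
exists c^-1 => _ [P' [y' [QP' [od'_gt0 ->]]]]; rewrite /pml.
(* every output probability is at least c times every entry of its column *)
have ratio_le : max_col K y' / out_dist K P' y' <= c^-1.
  rewrite ler_pdivrMr // mulrC /max_col bigmax_le ?divr_ge0 ?ltW // => x _.
  by rewrite ler_pdivlMr // mulrC (out_dist_ge_entry _ x QP').
case: (lerP (max_col K y' / out_dist K P' y') 1) => [le1|gt1].
  by rewrite (le_trans (ln_le0 le1)) // invr_ge0 ltW.
by rewrite (le_trans _ ratio_le) // ltW // ln_sublinear // (lt_trans ltr01).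
Qed.

Lemma entry_le_of_Cap K c eps P x y : 0 < c -> row_stochastic K ->
  Cap K (Qc c) <= eps -> Qc c P -> 0 < K x y ->
  K x y <= expR eps * out_dist K P y.
Proof.
move=> c_gt0 rsK Cap_le QP Kxy_gt0; have [K_ge0 _] := rsK.
have od_gt0 : 0 < out_dist K P y.
  by rewrite (lt_le_trans _ (out_dist_ge_entry _ x QP K_ge0)) ?mulr_gt0.
have mc_gt0 : 0 < max_col K y by apply: lt_le_trans (le_max_col _ _ x).
have pml_le := le_trans (pml_le_Cap c_gt0 rsK QP od_gt0) Cap_le.
apply: le_trans (le_max_col _ _ x) _.
rewrite -ler_pdivrMr // -[_ / _]lnK ?ler_expR //.
by rewrite posrE divr_gt0.
Qed.

Lemma Cap_le_of K c eps (x0 : 'I_N) : 0 < c -> N%:R * c <= 1 ->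
  (forall x y, 0 < K x y) ->
  (forall P y, Qc c P -> max_col K y <= expR eps * out_dist K P y) ->
  Cap K (Qc c) <= eps.
Proof.
move=> c_gt0 Nc_le1 K_gt0 mc_le.
have K_ge0 x y : 0 <= K x y by apply: ltW.
have od_gt0 P y : Qc c P -> 0 < out_dist K P y.
  by move=> QP; rewrite (lt_le_trans _ (out_dist_ge_entry _ x0 QP K_ge0)) ?mulr_gt0.
apply: ge_sup.
  have QP0 := Qc_concentrated x0 (ltW c_gt0) Nc_le1.
  by exists (pml K (concentrated c x0) ord0), (concentrated c x0), ord0; auto.
move=> _ [P [y [QP [_ ->]]]].
have mc_gt0 : 0 < max_col K y by apply: lt_le_trans (le_max_col _ _ x0).
rewrite /pml -ler_expR lnK ?posrE ?divr_gt0 ?od_gt0 //.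
by rewrite ler_pdivrMr ?od_gt0 // mc_le.
Qed.

(* Rows (1 + D)/2, (1 - D)/2 at i0, the reverse at i1 and (1/2, 1/2) elsewhere,
   so that both columns sum to N/2. *)
Definition two_point_kernel (i0 i1 : 'I_N) (D : R) : 'M[R]_(N, 2) :=
  let f x := (1 + D * ((x == i0)%:R - (x == i1)%:R)) / 2 in
  \matrix_(x, y) (if y == ord0 then f x else 1 - f x).

Section TwoPointKernel.
Variables (i0 i1 : 'I_N) (D : R).
Hypotheses (i0_neq_i1 : i0 != i1) (D_ge0 : 0 <= D) (D_le1 : D <= 1).
Let K := two_point_kernel i0 i1 D.

Lemma two_point_kernel_bounds x y : (1 - D) / 2 <= K x y <= (1 + D) / 2.
Proof.
(* lra ignores section hypotheses, hence the explicit [have := D_ge0] *)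
rewrite /K /two_point_kernel mxE; have := D_ge0.
have [-> | _] := eqVneq x i0; first rewrite (negbTE i0_neq_i1).
  by rewrite mulr1n mulr0n; case: (y == ord0) => ?; apply/andP; split; lra.
have [_ | _] := eqVneq x i1; rewrite mulr0n ?mulr1n ?mulr0n.
  all: by case: (y == ord0) => ?; apply/andP; split; lra.
Qed.

Lemma two_point_kernel_row_stochastic : row_stochastic K.
Proof.
split=> [x y|x]; last by rewrite sum_ord2 !mxE /=; ring.
have /andP[lo _] := two_point_kernel_bounds x y; apply: le_trans lo.
by have := D_le1; lra.
Qed.

Lemma two_point_kernel_colsum y : \sum_x K x y = N%:R / 2.
Proof.
have sum_ind (x' : 'I_N) : \sum_x (x == x')%:R = 1 :> R.
  by rewrite -[RHS](sum_mul_indicator (fun=> 1) x'); apply: eq_bigr => x _; rewrite mul1r.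
have col0 : \sum_x K x ord0 = N%:R / 2.
  under eq_bigr => x _ do rewrite mxE /=.
  rewrite -mulr_suml big_split /= sumr_const card_ord -mulr_sumr sumrB !sum_ind.
  by rewrite subrr mulr0 addr0.
have [-> // | y_neq0] := eqVneq y ord0.
have -> : y = ord_max by apply/val_inj; case: y y_neq0 => [[|[|]]].
under eq_bigr => x _ do rewrite (row_stochastic_col1 _ two_point_kernel_row_stochastic).
by rewrite sumrB col0 sumr_const card_ord; lra.
Qed.

Lemma two_point_kernel_TV : TV K i0 i1 = D.
Proof.
have i1_neq_i0 : i1 != i0 by rewrite eq_sym.
rewrite TV_binary; last exact: two_point_kernel_row_stochastic.
rewrite /K /two_point_kernel !mxE /=.
rewrite !eqxx (negbTE i0_neq_i1) (negbTE i1_neq_i0) mulr1n mulr0n.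
by rewrite (_ : _ - _ = D) ?ger0_norm //; field.
Qed.

End TwoPointKernel.

End BinaryKernels.

Section LeakageBound.
Variables (R : realType) (N : nat) (c eps : R).
Hypotheses (c_gt0 : 0 < c) (Nc_le1 : N%:R * c <= 1) (eps_ge0 : 0 <= eps).
Implicit Types K : 'M[R]_(N, 2).

Definition eta_bound : R := (expR eps - 1) / (expR eps * (1 - N%:R * c) + 1).

Lemma eta_bound_denom_gt0 : 0 < expR eps * (1 - N%:R * c) + 1.
Proof. by apply: ltr_wpDl => //; rewrite mulr_ge0 ?subr_ge0 // ltW ?expR_gt0. Qed.

Lemma eta_boundK : eta_bound * (expR eps * (1 - N%:R * c) + 1) = expR eps - 1.
Proof. by rewrite divfK // gt_eqF // eta_bound_denom_gt0. Qed.

Lemma eta_bound_ge0 : 0 <= eta_bound.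
Proof.
have e_ge1 : 1 <= expR eps by rewrite (le_trans _ (expR_ge1Dx eps)) ?lerDl.
by apply: divr_ge0; rewrite ?subr_ge0 // ltW ?eta_bound_denom_gt0.
Qed.

Lemma entry_diff_le K x x' : M eps c K -> K x ord0 - K x' ord0 <= eta_bound.
Proof.
move=> [rsK Cap_le]; have [K_ge0 _] := rsK.
have col1 := row_stochastic_col1 _ rsK.
set a := K x ord0; set b := K x' ord0.
have a_le1 : a <= 1 by have := K_ge0 x ord_max; rewrite col1 subr_ge0.
have [a_le0|a_gt0] := lerP a 0.
  by apply: le_trans eta_bound_ge0; rewrite subr_le0 (le_trans a_le0 (K_ge0 _ _)).
have [b_ge1|b_lt1] := lerP 1 b.
  by apply: le_trans eta_bound_ge0; rewrite subr_le0 (le_trans a_le1 b_ge1).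
set S := \sum_i K i ord0.
have S1 : \sum_i K i ord_max = N%:R - S.
  by under eq_bigr => i _ do rewrite col1; rewrite sumrB sumr_const card_ord.
have QP' := Qc_concentrated x' (ltW c_gt0) Nc_le1.
have QP := Qc_concentrated x (ltW c_gt0) Nc_le1.
have out0 := entry_le_of_Cap c_gt0 rsK Cap_le QP' a_gt0.
have out1 : K x' ord_max <= expR eps * out_dist K (concentrated c x) ord_max.
  by apply: entry_le_of_Cap c_gt0 rsK Cap_le QP _; rewrite col1 subr_gt0.
rewrite !out_dist_concentrated -/S S1 !col1 -/a -/b in out0 out1.
rewrite ler_pdivlMr ?eta_bound_denom_gt0 //.
(* adding the two constraints, the terms in c S cancel and c N + (1 - N c) = 1 *)
nra.
Qed.

Lemma eta_TV_le K : M eps c K -> eta_TV K <= eta_bound.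
Proof.
move=> MK; rewrite /eta_TV bigmax_le ?eta_bound_ge0 // => x _.
rewrite bigmax_le ?eta_bound_ge0 // => x' _.
rewrite TV_binary; last by case: MK.
by apply/ler_normlP; split; rewrite ?opprB entry_diff_le.
Qed.

Lemma eta_bound_lt1 : expR eps * (N%:R * c) < 2 -> eta_bound < 1.
Proof.
by move=> lt2; rewrite ltr_pdivrMr ?eta_bound_denom_gt0 // mul1r; lra.
Qed.

Lemma M0_eq_set0 : eta_bound < 1 -> @M0 R N eps c = set0.
Proof.
move=> lt1; rewrite -subset0 => K [MK [rsK zero_in_col]].
have [x0 Kx0] := zero_in_col ord0; have [x1 Kx1] := zero_in_col ord_max.
have := entry_diff_le K x1 x0 MK.
by rewrite Kx0 subr0; rewrite row_stochastic_col1 // in Kx1; lra.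
Qed.

Section Attained.
Variables (i0 i1 : 'I_N).
Hypotheses (i0_neq_i1 : i0 != i1) (bound_lt1 : eta_bound < 1).
Let K := two_point_kernel i0 i1 eta_bound.

Lemma two_point_kernel_gt0 x y : 0 < K x y.
Proof.
have /andP[lo _] := two_point_kernel_bounds i0_neq_i1 eta_bound_ge0 x y.
by apply: lt_le_trans lo; have := bound_lt1; lra.
Qed.

Lemma Cap_two_point_kernel : Cap K (Qc c) <= eps.
Proof.
set D := eta_bound; set q := 1 - N%:R * c.
have D_ge0 : 0 <= D := eta_bound_ge0.
have D_le1 : D <= 1 by apply: ltW.
have bounds x y := two_point_kernel_bounds i0_neq_i1 D_ge0 x y.
apply: (Cap_le_of i0 c_gt0 Nc_le1 two_point_kernel_gt0) => P y QP.
have mc_le : max_col K y <= (1 + D) / 2.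
  rewrite /max_col bigmax_le // => [|x _]; first by have := D_ge0; lra.
  by have /andP[] := bounds x y.
have od_ge : c * (N%:R / 2) + (1 - D) / 2 * q <= out_dist K P y.
  rewrite -(two_point_kernel_colsum i0_neq_i1 D_ge0 D_le1 y).
  apply: out_dist_ge_colsum => // [|x]; first by have := D_le1; lra.
  by have /andP[] := bounds x y.
apply: le_trans mc_le _; apply: le_trans (ler_wpM2l (ltW (expR_gt0 eps)) od_ge).
have := eta_boundK; rewrite -/D /q.
(* halving the defining equation D (e^eps q + 1) = e^eps - 1, using c N = 1 - q *)
nra.
Qed.

Lemma two_point_kernel_M1 : M1 eps c K.
Proof.
have rsK := two_point_kernel_row_stochastic i0_neq_i1 eta_bound_ge0 (ltW bound_lt1).
by split; split=> //; [apply: Cap_two_point_kernel | apply: two_point_kernel_gt0].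
Qed.

Lemma eta_TV_two_point_kernel : eta_TV K = eta_bound.
Proof.
apply/le_anti; rewrite eta_TV_le /=; last by case: two_point_kernel_M1.
rewrite -{1}(two_point_kernel_TV i0_neq_i1 eta_bound_ge0 (ltW bound_lt1)).
by rewrite /eta_TV (bigD1 i0) //= le_max (bigD1 i1) //= le_max lexx.
Qed.

End Attained.

End LeakageBound.

Theorem theorem3 (R : realType) (N : nat) (c eps : R) :
  (2 <= N)%N ->
  0 < c -> c <= (N%:R)^-1 ->
  0 <= eps -> eps < ln (2 / (N%:R * c)) ->
  [/\ sup [set eta_TV K | K in @M1 R N eps c] =
        (expR eps - 1) / (expR eps * (1 - N%:R * c) + 1),
      (@M2 R N eps c !=set0 ->
        sup [set eta_TV K | K in @M2 R N eps c] <= sup [set eta_TV K | K in @M1 R N eps c])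
    & @M0 R N eps c = set0].
Proof.
move=> N_ge2 c_gt0 c_le eps_ge0 eps_lt.
have N_gt0 : (0 < N)%N by apply: leq_trans N_ge2.
have Nc_gt0 : 0 < N%:R * c by rewrite mulr_gt0 ?ltr0n.
have Nc_le1 : N%:R * c <= 1 by rewrite -ler_pdivlMl ?ltr0n // mulr1.
have lt1 : eta_bound R N c eps < 1.
  apply: eta_bound_lt1 => //; rewrite -ltr_pdivlMr //.
  by rewrite -[2 / _]lnK ?ltr_expR // posrE divr_gt0.
pose i0 : 'I_N := Ordinal N_gt0; pose i1 : 'I_N := Ordinal N_ge2.
have sup_M1 : sup [set eta_TV K | K in @M1 R N eps c] = eta_bound R N c eps.
  apply: sup_eq_attained; first exists (two_point_kernel i0 i1 (eta_bound R N c eps)).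
  - exact: two_point_kernel_M1.
  - exact: eta_TV_two_point_kernel.
  - by move=> _ [K [MK _] <-]; apply: eta_TV_le.
split=> //; last exact: M0_eq_set0.
move=> [K M2K]; rewrite sup_M1; apply: ge_sup; first by exists (eta_TV K), K.
by move=> _ [K' [[MK' _] _] <-]; apply: eta_TV_le.
Qed.
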